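(* Let $M\in U_q^+$ be a $q$-commutator monomial $M\in\bigcup_kP_k$, given as an iterated $q$-bracket expression in the generators $E_i$. Then $\pi_B^+(M)=0$ if and only if, in this expression, some application of the $q$-bracket $[X,Y]_q$ has arguments $X,Y$ of weights $\alpha,\beta$ with $\langle\alpha,\beta\rangle_B=0$. If no such application occurs, $\pi_B^+(M)\in\mathcal{P}_B^+$ is a nonzero monomial (nonzero scalar multiple of a monomial in the $e_i$).
   Context: $\mathfrak{g}$ is an untwisted affine Lie algebra with Cartan matrix $A=(a_{ij})$ (indices $i=0,\dots,\ell$); $d_i$ coprime positive integers with $c_{ij}=d_ia_{ij}=d_ja_{ji}$, invariant form normalized by $(\alpha_i,\alpha_j)=c_{ij}$. Choose $\sigma_{ij}\in\{\pm1\}$ for $i<j$ with $a_{ij}\ne0$ and put $b_{ij}=\sigma_{ij}c_{ij}$ ($i<j$), $b_{ii}=0$, $b_{ij}=-\sigma_{ji}c_{ij}$ ($i>j$). Let $\{\cdot,\cdot\}_B$ be the skew-symmetric bilinear form on the root lattice with $\{\alpha_i,\alpha_j\}_B=b_{ij}$, and $\langle\alpha,\beta\rangle_B:=(\alpha,\beta)-\{\alpha,\beta\}_B$. $\mathcal{P}_B^+$ is the $\mathbb{Q}(q)$-algebra generated by $e_i$ with $e_ie_j=q^{b_{ij}}e_je_i$, and $\pi_B^+:U_q^+\to\mathcal{P}_B^+$ is the weight-graded algebra surjection with $E_i\mapsto e_i$, where $U_q^+$ is the positive part of the quantum enveloping algebra $U_q(\mathfrak{g})$ (generated by $E_i$,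 weight of $E_i$ is $\alpha_i$). The $q$-bracket is $[x,y]_q=xy-q^{(\mu,\nu)}yx$ for $x,y$ of weights $\mu,\nu$. $P_0=\{E_i\}$, $P_{k+1}=\bigcup_{a,b\le k}\{[x,y]_q:x\in P_a,y\in P_b\}$. *)

From HB Require Import structures.
From mathcomp Require Import all_boot all_order all_algebra.
From mathcomp Require Import fraction mpoly.
Set Implicit Arguments. Unset Strict Implicit. Unset Printing Implicit Defensive.
Import Order.TTheory GRing.Theory Num.Theory.
Local Open Scope ring_scope.

Definition Qq : fieldType := {fraction {poly rat}}.
Definition qQ : Qq := tofrac ('X : {poly rat}).

Section Cartan.
Variable n : nat. (* n = l+1, indices 0..l are 'I_n *)

Definition is_GCM (A : 'I_n -> 'I_n -> int) : Prop :=
  [/\ forall i, A i i = 2,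
      forall i j, i != j -> A i j <= 0 &
      forall i j, A i j = 0 <-> A j i = 0].

Definition indecomposable (A : 'I_n -> 'I_n -> int) : Prop :=
  forall S : {set 'I_n}, S != set0 -> S != setT ->
    exists i j, [/\ i \in S, j \notin S & A i j != 0].

Definition symmetrizer (A : 'I_n -> 'I_n -> int) (d : 'I_n -> nat) : Prop :=
  [/\ forall i, (0 < d i)%N,
      \big[gcdn/0%N]_(i < n) d i = 1%N &
      forall i j, (d i)%:Z * A i j = (d j)%:Z * A j i].

End Cartan.

(* Untwisted affine Cartan matrix with the affine node labelled 0:
   indecomposable GCM, positive null vector a of A with a_0 = 1 (affine type),
   positive null vector a^v of A^T with a^v_0 = 1, and alpha_0 a long root. *)
Definition untwisted_affine (l : nat) (A : 'I_l.+1 -> 'I_l.+1 -> int)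
    (d : 'I_l.+1 -> nat) : Prop :=
  [/\ is_GCM A, indecomposable A,
      exists a : 'I_l.+1 -> int,
        [/\ a ord0 = 1, forall i, 0 < a i & forall i, \sum_j A i j * a j = 0],
      exists av : 'I_l.+1 -> int,
        [/\ av ord0 = 1, forall i, 0 < av i & forall j, \sum_i av i * A i j = 0] &
      forall i, (d i <= d ord0)%N].

Section Quantum.
Variable n : nat.

Definition cmat (A : 'I_n -> 'I_n -> int) (d : 'I_n -> nat) (i j : 'I_n) : int :=
  (d i)%:Z * A i j.

(* b_ij, with sigma_ij = (-1)^(sg i j) *)
Definition bmat (A : 'I_n -> 'I_n -> int) (d : 'I_n -> nat)
    (sg : 'I_n -> 'I_n -> bool) (i j : 'I_n) : int :=
  if (i < j)%N then (-1) ^+ sg i j * cmat A d i j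
  else if (j < i)%N then - ((-1) ^+ sg j i * cmat A d i j)
  else 0.

Definition bform (g : 'I_n -> 'I_n -> int) (a b : 'I_n -> int) : int :=
  \sum_i \sum_j a i * b j * g i j.

Definition angB A d sg (a b : 'I_n -> int) : int :=
  bform (cmat A d) a b - bform (bmat A d sg) a b.

(* iterated q-bracket expressions in the generators E_i; the set of all such
   expressions is exactly \bigcup_k P_k *)
Inductive qexpr : Type :=
| QGen of 'I_n
| QBr of qexpr & qexpr.

Fixpoint wt (t : qexpr) : 'I_n -> int :=
  match t with
  | QGen i => fun k => (k == i)%:R
  | QBr x y => fun k => wt x k + wt y k
  end.

(* P_B^+ : as a vector space, the span of ordered monomials
   e^m = e_0^{m_0} ... e_{n-1}^{m_{n-1}}, modelled by 'X_[m];
   product: e^m1 e^m2 = q^(sum_{i>j} m1_i m2_j b_ij) e^(m1+m2),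
   which is the algebra generated by e_i = 'X_i with e_i e_j = q^{b_ij} e_j e_i. *)
Definition twist (B : 'I_n -> 'I_n -> int) (m1 m2 : 'X_{1..n}) : int :=
  \sum_(i < n) \sum_(j < n | (j < i)%N) (m1 i)%:Z * (m2 j)%:Z * B i j.

Definition qmul (B : 'I_n -> 'I_n -> int) (p r : {mpoly Qq[n]}) : {mpoly Qq[n]} :=
  \sum_(m1 <- msupp p) \sum_(m2 <- msupp r)
     (p@_m1 * r@_m2 * qQ ^ (twist B m1 m2)) *: 'X_[m1 + m2].

Definition qword (B : 'I_n -> 'I_n -> int) (w : seq 'I_n) : {mpoly Qq[n]} :=
  foldr (fun i p => qmul B 'X_i p) 1 w.

(* pi_B^+(M): image under the algebra map E_i |-> e_i of the expression M,
   with [x,y]_q = x y - q^{(mu,nu)} y x *)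
Fixpoint piB A d sg (t : qexpr) : {mpoly Qq[n]} :=
  match t with
  | QGen i => 'X_i
  | QBr x y =>
      qmul (bmat A d sg) (piB A d sg x) (piB A d sg y)
      - qQ ^ (bform (cmat A d) (wt x) (wt y)) *:
          qmul (bmat A d sg) (piB A d sg y) (piB A d sg x)
  end.

Fixpoint has_null_bracket A d sg (t : qexpr) : Prop :=
  match t with
  | QGen _ => False
  | QBr x y => angB A d sg (wt x) (wt y) = 0
               \/ has_null_bracket A d sg x \/ has_null_bracket A d sg y
  end.

End Quantum.
Arguments QGen {n}.
Arguments QBr {n}.

(* Every iterated q-bracket of generators is mapped by pi_B^+ to a scalar
   multiple of a single monomial.  If pi_B^+ X = a e^m1 and pi_B^+ Y = b e^m2,
   the commutation relations give
     pi_B^+ [X,Y]_q = a b (q^t(m1,m2) - q^((m1,m2) + t(m2,m1))) e^(m1+m2),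
   where q^t(m1,m2) is the factor produced by reordering e^m1 e^m2 (twist), and
   t(m1,m2) - t(m2,m1) = {m1,m2}_B since B is skew-symmetric.  As q is
   transcendental over Q, the new scalar vanishes exactly when a or b does or
   when (m1,m2) - {m1,m2}_B = <m1,m2>_B is 0; induction on the expression
   concludes. *)
From HB Require Import structures.
From mathcomp Require Import all_boot all_order all_algebra.
From mathcomp Require Import fraction mpoly.
Set Implicit Arguments. Unset Strict Implicit. Unset Printing Implicit Defensive.
Import GRing.Theory.
Local Open Scope ring_scope.

Lemma qQ_neq0 : qQ != 0.
Proof. by rewrite /qQ tofrac_eq0 polyX_eq0. Qed.

Lemma qQ_expn_eq1 (k : nat) : (qQ ^+ k == 1) = (k == 0%N).
Proof.
apply/idP/eqP => [|-> //]; rewrite /qQ -rmorphXn -(rmorph1 (@tofrac _)).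
rewrite tofrac_eq => /eqP /(congr1 (fun p : {poly rat} => size p)).
by rewrite size_polyXn size_poly1 => -[].
Qed.

Lemma qQ_expz_inj (a b : int) : qQ ^ a = qQ ^ b -> a = b.
Proof.
move=> eq_ab; apply/eqP; rewrite -subr_eq0; apply/eqP.
have : qQ ^ (a - b) = 1 by rewrite expfzDr ?qQ_neq0 // eq_ab -expfzDr ?qQ_neq0 // subrr.
case: (a - b) => k; first by move/eqP; rewrite qQ_expn_eq1 => /eqP ->.
by rewrite NegzE -invr_expz => /eqP; rewrite invr_eq1 qQ_expn_eq1.
Qed.

Lemma subr_qQ_expz_eq0 (a b : int) : (qQ ^ a - qQ ^ b == 0) = (a == b).
Proof. by rewrite subr_eq0; apply/eqP/eqP => [/qQ_expz_inj | ->]. Qed.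

Section Monomials.
Variable n : nat.
Implicit Types (B : 'I_n -> 'I_n -> int) (m : 'X_{1..n}).

Lemma scale_mpolyX_eq0 (c : Qq) m : (c *: 'X_[m] == 0 :> {mpoly Qq[n]}) = (c == 0).
Proof.
apply/eqP/eqP => [/(congr1 (mcoeff m))|->]; last exact: scale0r.
by rewrite mcoeffZ mcoeffX eqxx mulr1 mcoeff0.
Qed.

Lemma qmul_scaleX B (a b : Qq) m1 m2 :
  qmul B (a *: 'X_[m1]) (b *: 'X_[m2]) =
  (a * b * qQ ^ twist B m1 m2) *: 'X_[m1 + m2].
Proof.
have [->|a0] := eqVneq a 0; first by rewrite scale0r /qmul msupp0 big_nil !mul0r scale0r.
have [->|b0] := eqVneq b 0.
  by rewrite scale0r /qmul big1 ?mulr0 ?mul0r ?scale0r // => m _; rewrite msupp0 big_nil.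
rewrite /qmul (perm_big _ (msuppZ _ a0)) msuppX big_seq1.
rewrite (perm_big _ (msuppZ _ b0)) msuppX big_seq1.
by rewrite !mcoeffZ !mcoeffX !eqxx !mulr1.
Qed.

Lemma twist_skew B m1 m2 :
  (forall i, B i i = 0) -> (forall i j, B j i = - B i j) ->
  twist B m1 m2 - twist B m2 m1 =
  bform B (fun k => (m1 k)%:Z) (fun k => (m2 k)%:Z).
Proof.
move=> B_diag B_skew.
have -> : twist B m2 m1 =
    - \sum_(i < n) \sum_(j < n) (if (i < j)%N then (m1 i)%:Z * (m2 j)%:Z * B i j else 0).
  rewrite /twist -sumrN; under eq_bigr do rewrite big_mkcond /=.
  rewrite exchange_big /=; apply: eq_bigr => i _; rewrite -sumrN.
  apply: eq_bigr => j _; case: ifP => // _.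
  by rewrite B_skew mulrN (mulrC (m2 j)%:Z).
rewrite opprK /twist -big_split /=; apply: eq_bigr => i _.
rewrite big_mkcond -big_split /=; apply: eq_bigr => j _.
case: ltngtP => [_|_|/val_inj ->]; rewrite ?add0r ?addr0 //.
by rewrite B_diag mulr0.
Qed.

Definition mnm_of_word (w : seq 'I_n) : 'X_{1..n} :=
  foldr (fun i m => (U_(i) + m)%MM) 0%MM w.

Lemma mnm_of_word_cat w1 w2 :
  mnm_of_word (w1 ++ w2) = (mnm_of_word w1 + mnm_of_word w2)%MM.
Proof. by elim: w1 => [|i w IHw] /=; rewrite ?add0m // IHw addmA. Qed.

Lemma qword_scaleX B (w : seq 'I_n) :
  exists t : int, qword B w = qQ ^ t *: 'X_[mnm_of_word w].
Proof.
elim: w => [|i w [t IHw]] /=; first by exists 0; rewrite expr0z scale1r mpolyX0.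
exists (twist B U_(i)%MM (mnm_of_word w) + t).
by rewrite IHw -[X in qmul _ X _]scale1r qmul_scaleX mul1r expfzDr ?qQ_neq0 // mulrC.
Qed.

Fixpoint qexpr_word (t : qexpr n) : seq 'I_n :=
  match t with QGen i => [:: i] | QBr x y => qexpr_word x ++ qexpr_word y end.

Definition qexpr_mnm (t : qexpr n) := mnm_of_word (qexpr_word t).

Lemma qexpr_mnm_QBr (x y : qexpr n) :
  qexpr_mnm (QBr x y) = (qexpr_mnm x + qexpr_mnm y)%MM.
Proof. exact: mnm_of_word_cat. Qed.

Lemma wt_qexpr_mnm (t : qexpr n) k : wt t k = (qexpr_mnm t k)%:Z.
Proof.
elim: t => [i|x IHx y IHy] /=.
  by rewrite /qexpr_mnm /= addm0 mnm1E eq_sym; case: (i == k).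
by rewrite qexpr_mnm_QBr mnmDE PoszD IHx IHy.
Qed.

Lemma bform_wt g (x y : qexpr n) :
  bform g (wt x) (wt y) =
  bform g (fun k => (qexpr_mnm x k)%:Z) (fun k => (qexpr_mnm y k)%:Z).
Proof. by apply: eq_bigr => i _; apply: eq_bigr => j _; rewrite !wt_qexpr_mnm. Qed.

End Monomials.

Section Bracket.
Variables (n : nat) (A : 'I_n -> 'I_n -> int) (d : 'I_n -> nat).
Variable sg : 'I_n -> 'I_n -> bool.
Hypothesis dA_sym : forall i j, (d i)%:Z * A i j = (d j)%:Z * A j i.

Local Notation B := (bmat A d sg).
Local Notation C := (cmat A d).

Lemma bmat_diag i : B i i = 0.
Proof. by rewrite /bmat ltnn. Qed.

Lemma bmat_skew i j : B j i = - B i j.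
Proof.
by rewrite /bmat /cmat; case: ltngtP => _; rewrite ?oppr0 // dA_sym ?opprK.
Qed.

Lemma bform_bmat_wt (x y : qexpr n) :
  bform B (wt x) (wt y) =
  twist B (qexpr_mnm x) (qexpr_mnm y) - twist B (qexpr_mnm y) (qexpr_mnm x).
Proof. by rewrite bform_wt twist_skew //; [exact: bmat_diag | exact: bmat_skew]. Qed.

Definition bracket_factor (x y : qexpr n) : Qq :=
  qQ ^ twist B (qexpr_mnm x) (qexpr_mnm y) -
  qQ ^ (bform C (wt x) (wt y) + twist B (qexpr_mnm y) (qexpr_mnm x)).

Lemma bracket_factor_eq0 (x y : qexpr n) :
  (bracket_factor x y == 0) = (angB A d sg (wt x) (wt y) == 0).
Proof. by rewrite subr_qQ_expz_eq0 /angB bform_bmat_wt opprB addrA subr_eq0 eq_sym. Qed.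

Fixpoint bracket_coef (t : qexpr n) : Qq :=
  match t with
  | QGen _ => 1
  | QBr x y => bracket_coef x * bracket_coef y * bracket_factor x y
  end.

Lemma piB_bracket_coef (t : qexpr n) :
  piB A d sg t = bracket_coef t *: 'X_[qexpr_mnm t].
Proof.
elim: t => [i|x IHx y IHy] /=; first by rewrite scale1r /qexpr_mnm /= addm0.
rewrite IHx IHy !qmul_scaleX qexpr_mnm_QBr [(qexpr_mnm y + _)%MM]addmC scalerA -scalerBl.
congr (_ *: _); rewrite /bracket_factor expfzDr ?qQ_neq0 // mulrBr; congr (_ - _).
by rewrite mulrCA (mulrC (bracket_coef y)).
Qed.

Lemma bracket_coef_eq0 (t : qexpr n) :
  bracket_coef t = 0 <-> has_null_bracket A d sg t.
Proof.
elim: t => [i|x IHx y IHy] /=; first by split=> //; apply/eqP; exact: oner_neq0.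
split=> [/eqP|].
  rewrite !mulf_eq0 bracket_factor_eq0 => /orP[/orP[]|] /eqP.
  - by right; left; apply/IHx.
  - by right; right; apply/IHy.
  - by left.
case=> [/eqP|[/IHx|/IHy] ->]; rewrite ?mulr0 ?mul0r //.
by rewrite -bracket_factor_eq0 => /eqP ->; rewrite mulr0.
Qed.

End Bracket.

Theorem mainTheorem9 (l : nat) (A : 'I_l.+1 -> 'I_l.+1 -> int)
    (d : 'I_l.+1 -> nat) (sg : 'I_l.+1 -> 'I_l.+1 -> bool)
    (M : qexpr l.+1) :
  untwisted_affine A d -> symmetrizer A d ->
  (piB A d sg M = 0 <-> has_null_bracket A d sg M) /\
  (~ has_null_bracket A d sg M ->
     exists (c : Qq) (w : seq 'I_l.+1),
       c != 0 /\ piB A d sg M = c *: qword (bmat A d sg) w).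
Proof.
move=> _ [_ _ dA_sym].
have coef_eq0 := bracket_coef_eq0 sg dA_sym M.
have piB_M := piB_bracket_coef A d sg M.
have piB_eq0 : piB A d sg M = 0 <-> bracket_coef A d sg M = 0.
  rewrite piB_M; split=> [/eqP|->]; last exact: scale0r.
  by rewrite scale_mpolyX_eq0 => /eqP.
split=> [|not_null]; first exact: iff_trans piB_eq0 coef_eq0.
have coef_neq0 : bracket_coef A d sg M != 0 by apply/eqP => /coef_eq0.
have [t qword_M] := @qword_scaleX _ (bmat A d sg) (qexpr_word M).
exists (bracket_coef A d sg M * qQ ^ (- t)), (qexpr_word M); split.
  exact: mulf_neq0 coef_neq0 (expfz_neq0 _ qQ_neq0).
by rewrite piB_M qword_M scalerA -mulrA -expfzDr ?qQ_neq0 // addNr expr0z mulr1.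
Qed.
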